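(* Let $q\ge1$, $L\ge2$, $m=q\frac{L-1}{L}$, and $f\in C^1(\mathbb{R}^n,\mathbb{R})$. Let $w_{1,t},\dots,w_{L,t}\in\mathbb{R}^n$ solve the $L_p$ steepest flow with decoupled weight decay of unit strength $$dw_{i,t}=-\operatorname{sign}(\nabla_{w_i}F(w_t))\odot|\nabla_{w_i}F(w_t)|^{q-1}dt-w_{i,t}\,dt,\qquad F(w)=f\left(\textstyle\prod_iw_i\right),$$ from a balanced initialization ($|w_{i,0}|^q=|w_{j,0}|^q$ for all $i,j$). Let $R$ be separable with $\nabla^2_xR(x)=\operatorname{diag}\left(\frac{1}{L|x_i|^m}\right)$. Then $x_t=\prod_iw_{i,t}$ satisfies $$d\nabla_xR(x_t)=-\operatorname{sign}(\nabla_xf(x_t))\odot|\nabla_xf(x_t)|^{q-1}dt-\nabla_xM_{\mathrm{reg}}(x_t)\,dt,$$ where the on-manifold regularizer $M_{\mathrm{reg}}$ is (up to an additive constant): (a) if $m\neq2$, $M_{\mathrm{reg}}(x)=\frac{L}{L(2-q)+q}\sum_{i\in[n]}|x_i|^{2-q\frac{L-1}{L}}$; (b) if $m=2$, $M_{\mathrm{reg}}(x)=\sum_{i\in[n]}\log(|x_i|)$.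
   Context: All operations are entrywise, $q$ is dual to $p$ ($1/p+1/q=1$). For a separable regularizer $h(x)=\sum_ih_i(x_i)$ and a separable mirror map $R$, the on-manifold regularizer is $M_{\mathrm{reg}}(x)=\sum_{i\in[n]}\int^{x_i}\partial_i^2R_i(s)\,\partial_ih_i(s)\,ds$; decoupled weight decay on the $w_i$ corresponds in $x$ to $\partial_ih_i(x_i)=Lx_i$. *)

From HB Require Import structures.
From mathcomp Require Import all_boot all_order all_algebra.
From mathcomp Require Import all_classical all_reals all_analysis.
Set Implicit Arguments. Unset Strict Implicit. Unset Printing Implicit Defensive.
Import Order.TTheory GRing.Theory Num.Theory.
Import numFieldNormedType.Exports.
Local Open Scope ring_scope.

(* partial derivative d g / d x_{i k} of g : 'M_(a,b) -> R at x
   (for a function on 'rV_n = 'M_(1,n) use i = 0) *)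
Definition partial (R : realType) (a b : nat) (g : 'M[R]_(a, b) -> R)
  (x : 'M[R]_(a, b)) (i : 'I_a) (k : 'I_b) : R :=
  derive g x (delta_mx i k).

Definition C1 (R : realType) (n : nat) (f : 'rV[R]_n -> R) : Prop :=
  (forall x, differentiable f x) /\
  (forall k : 'I_n, continuous (fun x => partial f x 0 k)).

Definition prodw (R : realType) (L n : nat) (w : 'M[R]_(L, n)) : 'rV[R]_n :=
  \row_k \prod_(i < L) w i k.

Definition Fw (R : realType) (L n : nat) (f : 'rV[R]_n -> R)
  (w : 'M[R]_(L, n)) : R := f (prodw w).

Definition sgpow (R : realType) (q g : R) : R := Num.sg g * (`|g| `^ (q - 1)).

Definition mexp (R : realType) (q : R) (L : nat) : R :=
  q * (L%:R - 1) / L%:R.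

Definition Mreg (R : realType) (q : R) (L n : nat) (x : 'rV[R]_n) : R :=
  if mexp q L != 2 then
    L%:R / (L%:R * (2 - q) + q) * \sum_(k < n) `|x 0 k| `^ (2 - mexp q L)
  else \sum_(k < n) ln `|x 0 k|.

From HB Require Import structures.
From mathcomp Require Import all_boot all_order all_algebra.
From mathcomp Require Import all_classical all_reals all_analysis.
From mathcomp Require Import lra ring.
Set Implicit Arguments. Unset Strict Implicit. Unset Printing Implicit Defensive.
Import Order.TTheory GRing.Theory Num.Theory.
Import numFieldNormedType.Exports.
Local Open Scope classical_set_scope.
Local Open Scope ring_scope.

(* Fix a coordinate k and write u_i = w_{i,k}, X = x_k = prod_i u_i and
   g = d_k f(x).  By the chain rule d_{w_{i,k}} F = g prod_{j <> i} u_j, so along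
   the flow d/dt (e^{qt} |u_i|^q) = - q e^{qt} sgpow(g X), which does not depend
   on i: the balanced initialization persists, |u_i(t)| = a(t) for all i.  Then
   |prod_{j <> i} u_j|^q = a^{q(L-1)} = |X|^m, and the product rule gives
   dX/dt = - L (|X|^m sgpow(g) + X).  Multiplying by the Hessian 1/(L |X|^m)
   yields - sgpow(g) - X/|X|^m, and X/|X|^m = d_k M_reg(x) in both cases. *)

Lemma derive_along_line (R : realType) (V W : normedModType R) (F : V -> W)
    (x v : V) :
  derive F x v = derive (fun h : R => F (h *: v + x)) 0 1.
Proof.
rewrite /derive; suff -> : (fun h : R => h^-1 *: ((F \o shift x) (h *: v) - F x)) =
    (fun h : R => h^-1 *: (((fun h0 : R => F (h0 *: v + x)) \o shift 0) (h *: 1)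
      - (fun h0 : R => F (h0 *: v + x)) 0)) by [].
apply: funext => h /=.
by rewrite /shift scale0r add0r addr0 [h *: 1]mulr1.
Qed.

Lemma is_derive_powR_norm (R : realType) (p y : R) : y != 0 ->
  is_derive y 1 (fun z : R => `|z| `^ p) (p * `|y| `^ (p - 1) * Num.sg y).
Proof.
move=> y0; have [yn|yp] := ltP y 0.
  have H : is_derive y 1 ((@powR R ^~ p) \o -%R) (p * (- y) `^ (p - 1) * -1).
    by apply: is_derive1_comp; apply: is_derive1_powR; rewrite oppr_gt0.
  rewrite ltr0_norm // ltr0_sg //; apply: near_eq_is_derive H.
  by near=> z; rewrite /= ltr0_norm //; near: z; exact: lt_nbhsl.
have {}yp : 0 < y by rewrite lt_neqAle eq_sym y0.
rewrite gtr0_norm // gtr0_sg // mulr1; apply: near_eq_is_derive (is_derive1_powR p yp).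
by near=> z; rewrite gtr0_norm //; near: z; exact: lt_nbhsr.
Unshelve. all: by end_near. Qed.

Lemma is_derive_ln_norm (R : realType) (y : R) : y != 0 ->
  is_derive y 1 (fun z : R => ln `|z|) y^-1.
Proof.
move=> y0; have [yn|yp] := ltP y 0.
  have H : is_derive y 1 (@ln R \o -%R) ((- y)^-1 * -1).
    by apply: is_derive1_comp; apply: is_derive1_ln; rewrite oppr_gt0.
  rewrite invrN mulrN1 opprK in H; apply: near_eq_is_derive H.
  by near=> z; rewrite /= ltr0_norm //; near: z; exact: lt_nbhsl.
have {}yp : 0 < y by rewrite lt_neqAle eq_sym y0.
apply: near_eq_is_derive (is_derive1_ln yp).
by near=> z; rewrite gtr0_norm //; near: z; exact: lt_nbhsr.
Unshelve. all: by end_near. Qed.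

Lemma is_derive_translate (R : realType) (G : R -> R) (a dG : R) :
  is_derive a 1 G dG -> is_derive (0 : R) 1 (fun h => G (h + a)) dG.
Proof.
move=> dGa; rewrite -[dG]mulr1; apply: (is_derive1_comp (g := fun h => h + a)).
  by rewrite add0r.
by have := is_deriveD (is_derive_id (0 : R) 1) (is_derive_cst a (0 : R) 1); rewrite addr0.
Qed.

Lemma is_derive_right_le (R : realType) (F : R -> R) (s df e : R) :
  is_derive s 1 F df -> 0 < e ->
  \forall x \near s^'+, F x <= F s + (df + e) * (x - s).
Proof.
move=> [dF <-] e0.
have := cvgr_lt _ dF ('D_1 F s + e); rewrite ltrDl => /(_ _ e0).
rewrite near_withinE => /nbhs_ballP[d /= d0 Qd].
near=> x; have sx : 0 < x - s by rewrite subr_gt0; near: x; exact: nbhs_right_gt.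
have := Qd (x - s); rewrite /ball /= sub0r normrN gtr0_norm // gt_eqF //.
rewrite [_%:A]mulr1 subrK ltr_pdivrMl // ltrBlDl mulrC => Q.
rewrite -lerBlDl ltW // Q //; near: x; apply: nbhs_right_lt; rewrite ltrDl.
Unshelve. all: by end_near. Qed.

Lemma continuous_powR_norm (R : realType) (q : R) : 1 <= q ->
  continuous (fun z : R => `|z| `^ q).
Proof.
move=> q1 z; have [->|z0] := eqVneq z 0; last first.
  by have [/derivable1_diffP/differentiable_continuous] := is_derive_powR_norm q z0.
have q0 : q != 0 by rewrite gt_eqF // (lt_le_trans ltr01).
apply/cvgrPdist_lt => e e0; near=> y.
rewrite normr0 powR0 // sub0r normrN ger0_norm ?powR_ge0 //.
have [->|y0] := eqVneq y 0; first by rewrite normr0 powR0.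
have y1 : `|y| < Num.min e 1.
  near: y; exists (Num.min e 1); first by rewrite /= lt_min e0 ltr01.
  by move=> y; rewrite /ball /= sub0r normrN.
move: y1; rewrite lt_min => /andP[ye y1].
by apply: le_lt_trans ye; apply: ge1r_powR; rewrite // normr_gt0 y0 ltW.
Unshelve. all: by end_near. Qed.

Lemma is_derive_prod (R : realType) (I : Type) (r : seq I) (F : I -> R -> R)
    (dF : I -> R) (t : R) :
  (forall i, is_derive t 1 (F i) (dF i)) -> (forall i, F i t != 0) ->
  is_derive t 1 (fun s => \prod_(i <- r) F i s)
    (\sum_(i <- r) (\prod_(j <- r) F j t) * (dF i / F i t)).
Proof.
move=> dFt Ft0; elim: r => [|a r IH].
  by rewrite !big_nil; under eq_fun do rewrite big_nil; exact: is_derive_cst.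
under eq_fun do rewrite big_cons.
apply: is_derive_eq (is_deriveM (dFt a) IH) _.
have scaleE (x y : R) : x *: y = x * y by [].
rewrite big_cons big_cons !scaleE mulr_sumr addrC.
congr (_ + _); first by field; exact: Ft0.
by apply: eq_bigr => i _; rewrite mulrA.
Qed.

Section RightDini.
Variables (R : realType) (phi : R -> R) (a b : R).
Hypothesis phi_a : phi a <= 0.
Hypothesis phi_right : forall s, a <= s < b -> phi x @[x --> s^'+] --> phi s.
Hypothesis phi_left : forall s, a < s <= b -> phi x @[x --> s^'-] --> phi s.
Hypothesis phi_dini : forall s, a < s < b -> 0 < phi s -> forall e, 0 < e ->
  \forall x \near s^'+, phi x <= phi s + e * (x - s).

Section Slope.
Variable c : R.
Hypothesis c_gt0 : 0 < c.
Let B r := c * (r - a + 1).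

Let B_ge s : a <= s -> c <= B s.
Proof.
move=> as_; rewrite /B -subr_ge0 mulrDr mulr1 addrK.
by apply: mulr_ge0; rewrite ?subr_ge0 // ltW.
Qed.

Let B_lt s x : s < x -> B s < B x.
Proof. by move=> sx; rewrite /B ltr_pM2l // ltrD2r ltrD2r. Qed.

Let below_right s : a <= s < b -> phi s <= B s ->
  \forall x \near s^'+, phi x <= B x.
Proof.
move=> /andP[as_ sb] ps; have [ps0|ps0] := leP (phi s) 0.
  have ps_c : phi s < c by apply: le_lt_trans ps0 c_gt0.
  have phi_s : phi x @[x --> s^'+] --> phi s by apply: phi_right; rewrite as_.
  near=> x; apply: ltW; apply: lt_le_trans (B_ge _).
    by near: x; exact: cvgr_lt _ phi_s _ ps_c.
  by apply: le_trans as_ _; apply: ltW; near: x; exact: nbhs_right_gt.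
have a_s : a < s by rewrite lt_neqAle as_ andbT; apply: contraTneq ps0 => <-; rewrite -leNgt.
near=> x; apply: le_trans (_ : phi s + c * (x - s) <= _).
  by near: x; apply: phi_dini; rewrite ?a_s.
by move: ps; rewrite /B; lra.
Unshelve. all: by end_near. Qed.

(* [inf S] would be a first point where [phi] crosses the barrier [B]; [below_right]
   rules it out. *)
Lemma right_dini_le_affine : a < b -> phi b <= B b.
Proof.
move=> ab; rewrite leNgt; apply/negP => Bb.
pose S := [set s | a <= s <= b /\ B s < phi s].
have Sb : S b by split => //; rewrite ltW // lexx.
have S_lb : lbound S a by move=> s [/andP[]].
set i := inf S.
have ai : a <= i by apply: lb_le_inf; [exists b | ].
have ib : i <= b by apply: ge_inf; [exists a | ].
have below_i x : a <= x < i -> phi x <= B x.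
  move=> /andP[ax xi]; rewrite leNgt; apply/negP => Bx.
  suff : i <= x by rewrite leNgt xi.
  apply: ge_inf; first by exists a.
  by split => //; rewrite ax (ltW (lt_le_trans xi ib)).
have phi_i : phi i <= B i.
  have [<-|a_i] := eqVneq a i.
    exact: le_trans phi_a (ltW (lt_le_trans c_gt0 (B_ge _))).
  have {}a_i : a < i by rewrite lt_neqAle a_i.
  apply: (@ler_cvg_to _ (i^'-) _ _ phi (cst (B i)) _ _ (phi_left _) (cvg_cst _)).
    by rewrite a_i.
  near=> x; apply: le_trans (below_i x _) (ltW (B_lt _)).
    by apply/andP; split; [apply: ltW | ]; near: x; [exact: nbhs_left_gt | exact: nbhs_left_lt].
  by near: x; exact: nbhs_left_lt.
have i_lt_b : i < b.
  by rewrite lt_neqAle ib andbT; apply/eqP => ib_eq; move: phi_i; rewrite ib_eq leNgt Bb.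
have ai_b : a <= i < b by rewrite ai i_lt_b.
have := below_right ai_b phi_i.
apply/not_near_at_rightP => d.
have [s Ss sd] : exists2 s, S s & s < i + d%:num.
  by apply: inf_adherent => //; split; [exists b | exists a].
exists s; last by case: Ss => _ /lt_geF ->.
have i_s : i <= s by apply: ge_inf => //; exists a.
rewrite sd andbT lt_neqAle i_s andbT.
by apply/eqP => is_eq; move: Ss phi_i; rewrite -is_eq => -[_ /lt_geF ->].
Unshelve. all: by end_near. Qed.

End Slope.

Lemma right_dini_le0 : a < b -> phi b <= 0.
Proof.
move=> ab; apply/ler_addgt0Pr => e e0; rewrite add0r.
have ba_gt0 : 0 < b - a + 1 by rewrite ltr_wpDl // subr_ge0 ltW.
have := right_dini_le_affine (divr_gt0 e0 ba_gt0) ab.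
by rewrite mulfVK // gt_eqF.
Qed.

End RightDini.

Lemma sgpowM (R : realType) (q a b : R) :
  sgpow q (a * b) = sgpow q a * sgpow q b.
Proof. by rewrite /sgpow sgrM normrM powRM ?normr_ge0 // mulrACA. Qed.

Lemma mulr_sgpow (R : realType) (q a : R) : 0 < q -> a * sgpow q a = `|a| `^ q.
Proof.
by move=> q0; rewrite /sgpow mulrA [a * _]mulrC -normrEsg mulr_powRB1.
Qed.

Lemma partial_Fw (R : realType) (L n : nat) (f : 'rV[R]_n -> R)
    (W : 'M[R]_(L, n)) i k :
  differentiable f (prodw W) ->
  partial (Fw f) W i k = partial f (prodw W) 0 k * \prod_(j < L | j != i) W j k.
Proof.
move=> df; rewrite /partial derive_along_line.
set c := \prod_(j < L | j != i) W j k.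
have -> : (fun h : R => Fw f (h *: delta_mx i k + W)) =
          (fun h : R => f (h *: (c *: delta_mx 0 k) + prodw W)).
  apply: funext => h; rewrite /Fw; congr f; apply/rowP => j.
  rewrite /prodw !mxE (bigD1 i) //= [X in _ = _ + X](bigD1 i) //= !mxE eqxx /=.
  rewrite (eq_bigr (fun l => W l j)) => [|l li]; last first.
    by rewrite !mxE (negbTE li) mulr0 add0r.
  have [->|jk] := eqVneq j k; first by rewrite mulr1n !mulr1 mulrDl.
  by rewrite mulr0n !mulr0 !add0r.
by rewrite -derive_along_line (deriveE _ df) linearZ /= -deriveE // mulrC.
Qed.

Lemma is_derive_sum_coord (R : realType) (n : nat) (G : R -> R) (dG : R)
    (x : 'rV[R]_n) (k : 'I_n) :
  is_derive (x 0 k) 1 G dG ->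
  is_derive (0 : R) 1 (fun h : R => \sum_(j < n) G ((h *: delta_mx 0 k + x) 0 j)) dG.
Proof.
move=> dGx; have coord h j : (h *: delta_mx 0 k + x) 0 j =
    (if j == k then h + x 0 k else x 0 j).
  rewrite !mxE eqxx /=; have [->|jk] := eqVneq j k; first by rewrite mulr1n mulr1.
  by rewrite mulr0n mulr0 add0r.
pose K := \sum_(j < n | j != k) G (x 0 j).
have -> : (fun h : R => \sum_(j < n) G ((h *: delta_mx 0 k + x) 0 j)) =
          (fun h => G (h + x 0 k)) \+ cst K.
  apply: funext => h /=; rewrite (bigD1 k) //= coord eqxx; congr (_ + _).
  by apply: eq_bigr => j jk; rewrite coord (negbTE jk).
rewrite -[dG]addr0; apply: is_deriveD; exact: is_derive_translate.
Qed.

Lemma partial_Mreg (R : realType) (q : R) (L n : nat) (x : 'rV[R]_n) k :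
  (0 < L)%N -> x 0 k != 0 ->
  partial (@Mreg R q L n) x 0 k = x 0 k / `|x 0 k| `^ mexp q L.
Proof.
move=> L0 xk; rewrite /partial derive_along_line /Mreg.
have L0' : (L%:R : R) != 0 by rewrite pnatr_eq0 -lt0n.
have ax0 : `|x 0 k| != 0 by rewrite normr_eq0.
set m := mexp q L; have [m2|m2] := eqVneq m 2.
  rewrite /=; have [_ ->] := is_derive_sum_coord (is_derive_ln_norm xk).
  rewrite m2 powR_mulrn ?normr_ge0 // real_normK ?num_real //.
  by rewrite expr2 invfM mulrA mulfV // mul1r.
rewrite /=; set C := L%:R / (L%:R * (2 - q) + q).
have [_ ->] := is_deriveZ C (is_derive_sum_coord (is_derive_powR_norm (2 - m) xk)).
(* L (2 - q) + q = L (2 - m) vanishes only when m = 2. *)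
have D0 : L%:R * (2 - q) + q != 0.
  apply: contra m2 => /eqP D0; apply/eqP; rewrite /m /mexp.
  have -> : q * (L%:R - 1) = L%:R * 2 - (L%:R * (2 - q) + q) by ring.
  by rewrite D0 subr0 mulrAC mulfV // mul1r.
have HC : C * (2 - m) = 1 by rewrite /C /m /mexp; field; rewrite D0 L0'.
have -> : 2 - m - 1 = 1 + - m by ring.
rewrite powRD ?ax0 ?implybT // powRr1 ?normr_ge0 // powRN.
rewrite -[_ *: _]/(C * _) -[RHS](congr1 (fun y => y / _) (mulr_sg_norm (x 0 k))).
by rewrite !mulrA HC mul1r; ring.
Qed.

Section Balance.
Variables (R : realType) (q T : R) (L : nat) (u : 'I_L -> R -> R) (g : R -> R).
Hypothesis q_ge1 : 1 <= q.
Hypothesis u_right0 : forall i, u i x @[x --> 0^'+] --> u i 0.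
Hypothesis u_flow : forall t, 0 < t < T -> forall i, is_derive t 1 (u i)
  (- sgpow q (g t * \prod_(j < L | j != i) u j t) - u i t).

Let q_gt0 : 0 < q. Proof. exact: lt_le_trans ltr01 q_ge1. Qed.

Let weighted i s := expR (q * s) * `|u i s| `^ q.

Let is_derive_weighted i s : 0 < s < T -> u i s != 0 ->
  is_derive s 1 (weighted i) (- q * expR (q * s) * sgpow q (g s * \prod_(j < L) u j s)).
Proof.
move=> sT ui.
have dE : is_derive s 1 (expR \o ( *%R q)) (expR (q * s) * q).
  by rewrite -[q in expR _ * q]mulr1; apply: is_derive1_comp.
have dA := is_derive1_comp (is_derive_powR_norm q ui) (u_flow sT i).
apply: is_derive_eq (is_deriveM dE dA) _.
have uq : `|u i s| `^ (q - 1) * Num.sg (u i s) * u i s = `|u i s| `^ q.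
  by rewrite -mulrA -normrEsg mulrC mulr_powRB1.
rewrite [in RHS](bigD1 i) //= !sgpowM -[_ *: _]/(_ * _) -[_ *: _]/(_ * _) /=.
by rewrite -uq /sgpow; ring.
Qed.

Let weighted_ge0 i s : 0 <= weighted i s.
Proof. by rewrite mulr_ge0 ?powR_ge0 // ltW // expR_gt0. Qed.

Let u_cvg i s : 0 < s < T -> u i x @[x --> s] --> u i s.
Proof. by move=> sT; have [/derivable1_diffP/differentiable_continuous] := u_flow sT i. Qed.

Let weighted_cvg i (F : set_system R) {FF : Filter F} s :
  u i @ F --> u i s -> (fun r => r) @ F --> s -> weighted i @ F --> weighted i s.
Proof.
move=> us rs; apply: cvgM.
  have qrs : (fun r => q * r) @ F --> q * s by apply: cvgMr.
  exact: (continuous_cvg _ (@continuous_expR R _) qrs).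
exact: (continuous_cvg _ (@continuous_powR_norm R q q_ge1 _) us).
Qed.

Let weighted_right i s : 0 <= s < T -> weighted i x @[x --> s^'+] --> weighted i s.
Proof.
case/andP; rewrite le_eqVlt => /predU1P[<- _|s0 sT].
  by apply: weighted_cvg => //; apply: cvg_at_right_filter; exact: cvg_id.
by apply: cvg_at_right_filter; apply: weighted_cvg; [apply: u_cvg; rewrite s0 | exact: cvg_id].
Qed.

Let weighted_left i s : 0 < s < T -> weighted i x @[x --> s^'-] --> weighted i s.
Proof.
move=> sT; apply: cvg_at_left_filter.
by apply: weighted_cvg; [exact: u_cvg | exact: cvg_id].
Qed.

(* For q = 1, [weighted j] is not differentiable where [u j] vanishes; there
   the product vanishes too, so [weighted i] is stationary while
   [weighted j >= 0] can only grow. *)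
Let weighted_le i j t : 0 < t < T -> weighted i 0 = weighted j 0 ->
  weighted i t <= weighted j t.
Proof.
move=> /andP[t0 tT] w0; rewrite -subr_le0.
have tT' s : s <= t -> s < T by move=> st; exact: le_lt_trans st tT.
apply: (@right_dini_le0 _ (weighted i \- weighted j) 0 t) => //.
- by rewrite /= w0 subrr.
- move=> s /andP[s0 st]; apply: cvgB; apply: weighted_right; rewrite s0 tT' ?ltW //.
- move=> s /andP[s0 st]; apply: cvgB; apply: weighted_left; rewrite s0 tT' //.
move=> s /andP[s0 st] /= ps e e0.
have sT : 0 < s < T by rewrite s0 tT' ?ltW.
have ui : u i s != 0.
  apply: contraTneq ps => uis; rewrite {1}/weighted uis normr0 powR0 ?gt_eqF //.
  by rewrite mulr0 sub0r oppr_gt0 -leNgt weighted_ge0.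
have [uj|uj] := eqVneq (u j s) 0.
  have X0 : \prod_(l < L) u l s = 0 by rewrite (bigD1 j) //= uj mul0r.
  have wj0 : weighted j s = 0 by rewrite /weighted uj normr0 powR0 ?gt_eqF // mulr0.
  have := is_derive_weighted sT ui; rewrite X0 mulr0 /sgpow sgr0 !mul0r mulr0.
  move=> /is_derive_right_le /(_ e0) /filterS; apply=> x; rewrite add0r wj0 subr0.
  by move=> H; apply: le_trans H; rewrite lerBlDr lerDl weighted_ge0.
have := is_deriveB (is_derive_weighted sT ui) (is_derive_weighted sT uj).
by rewrite subrr => /is_derive_right_le /(_ e0); rewrite add0r.
Qed.

Lemma flow_balanced : (forall i j, `|u i 0| `^ q = `|u j 0| `^ q) ->
  forall t, 0 < t < T -> forall i j, `|u i t| = `|u j t|.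
Proof.
move=> u0 t tT i j.
have w0 k l : weighted k 0 = weighted l 0 by rewrite /weighted (u0 k l).
have : weighted i t = weighted j t by apply/le_anti; rewrite !weighted_le.
move=> /(mulfI (lt0r_neq0 (expR_gt0 (q * t)))).
by apply: powR_injective; rewrite ?nnegrE.
Qed.

End Balance.

Lemma powR_norm_prod_balanced (R : realType) (L : nat) (q a : R) (v : 'I_L -> R)
    (i : 'I_L) :
  0 <= a -> (forall j, `|v j| = a) ->
  `|\prod_(j < L | j != i) v j| `^ q = `|\prod_(j < L) v j| `^ mexp q L.
Proof.
move=> a0 va; have L0 : (0 < L)%N := leq_ltn_trans (leq0n i) (ltn_ord i).
have Pi : `|\prod_(j < L | j != i) v j| = a ^+ L.-1.
  by rewrite normr_prod (eq_bigr _ (fun j _ => va j)) prodr_const cardC1 card_ord.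
have P : `|\prod_(j < L) v j| = a ^+ L.
  by rewrite normr_prod (eq_bigr _ (fun j _ => va j)) prodr_const card_ord.
rewrite Pi P -!powR_mulrn // -!powRrM; congr (a `^ _).
by rewrite /mexp -[in RHS](prednK L0) -natr1; field; rewrite natr1 pnatr_eq0.
Qed.

Lemma is_derive_prod_balanced (R : realType) (q : R) (L : nat)
    (u : 'I_L -> R -> R) (g : R -> R) (t : R) :
  0 < q ->
  (forall i, is_derive t 1 (u i)
     (- sgpow q (g t * \prod_(j < L | j != i) u j t) - u i t)) ->
  (forall i j, `|u i t| = `|u j t|) -> \prod_(i < L) u i t != 0 ->
  is_derive t 1 (fun s => \prod_(i < L) u i s)
    (- L%:R * (`|\prod_(i < L) u i t| `^ mexp q L * sgpow q (g t)
               + \prod_(i < L) u i t)).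
Proof.
move=> q0 du bal X0.
have u0 i : u i t != 0 by apply: contraNneq X0 => ui0; rewrite (bigD1 i) //= ui0 mul0r.
apply: is_derive_eq (is_derive_prod _ du u0) _.
set X := \prod_(i < L) u i t.
rewrite (eq_bigr (fun=> - (`|X| `^ mexp q L * sgpow q (g t) + X))) => [|i _].
  by rewrite sumr_const card_ord mulNr mulr_natl mulNrn.
set P := \prod_(j < L | j != i) u j t.
have XP : X = u i t * P by rewrite /X (bigD1 i).
have PP : P * sgpow q (g t * P) = sgpow q (g t) * `|X| `^ mexp q L.
  rewrite sgpowM mulrCA mulr_sgpow //; congr (_ * _).
  exact: powR_norm_prod_balanced (normr_ge0 _) (fun j => bal j i).
transitivity (- (P * sgpow q (g t * P)) - X); last by rewrite PP opprD mulrC.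
rewrite {1}XP mulrAC mulrCA mulfV // mulr1 [LHS]mulrC mulrBr mulrN XP.
by rewrite [P * u i t]mulrC.
Qed.

Theorem theorem4 (R : realType) (n L : nat) (q T : R)
  (f : 'rV[R]_n -> R) (w : R -> 'M[R]_(L, n)) (Rs : 'I_n -> R -> R) :
  1 <= q -> (2 <= L)%N -> C1 f -> 0 < T ->
  (* w solves the flow on [0, T) *)
  (forall i k, (fun s => w s i k) @ 0^'+ --> w 0 i k) ->
  (forall t, 0 < t < T -> forall i k,
     is_derive t 1 (fun s => w s i k)
       (- sgpow q (partial (Fw f) (w t) i k) - w t i k)) ->
  (* balanced initialization *)
  (forall i j k, `|w 0 i k| `^ q = `|w 0 j k| `^ q) ->
  (* R separable, R(x) = sum_k Rs k x_k, with Hessian diag(1/(L |x_k|^m)) *)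
  (forall (k : 'I_n) (s : R), s != 0 -> derivable (Rs k) s 1) ->
  (forall (k : 'I_n) (s : R), s != 0 ->
     is_derive s 1 (derive1 (Rs k)) (1 / (L%:R * `|s| `^ mexp q L))) ->
  forall t : R, 0 < t < T -> forall k : 'I_n, (prodw (w t)) 0 k != 0 ->
    is_derive t 1 (fun s => (derive1 (Rs k)) ((prodw (w s)) 0 k))
      (- sgpow q (partial f (prodw (w t)) 0 k)
       - partial (@Mreg R q L n) (prodw (w t)) 0 k).
Proof.
(* Only the derivative of [Rs k] enters. *)
move=> q_ge1 L_ge2 [f_diff _] _ w_right0 w_flow w_bal _ Rs_hess t tT k xk.
have q_gt0 : 0 < q by apply: lt_le_trans q_ge1.
pose u i s := w s i k; pose g s := partial f (prodw (w s)) 0 k.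
have xE s : prodw (w s) 0 k = \prod_(i < L) u i s by rewrite mxE.
have u_flow s : 0 < s < T -> forall i, is_derive s 1 (u i)
    (- sgpow q (g s * \prod_(j < L | j != i) u j s) - u i s).
  by move=> sT i; rewrite /g /u -partial_Fw; [exact: w_flow | exact: f_diff].
have bal := flow_balanced (u := u) q_ge1 (fun i => w_right0 i k) u_flow
  (fun i j => w_bal i j k) tT.
rewrite xE in xk.
have := is_derive1_comp (Rs_hess k _ xk) (is_derive_prod_balanced q_gt0 (u_flow t tT) bal xk).
under eq_fun do rewrite -xE.
rewrite partial_Mreg ?xE ?(leq_trans _ L_ge2) // -/(g t).
set X := \prod_(i < L) u i t => dx; apply: is_derive_eq dx _.
have L0 : L%:R != 0 :> R by rewrite pnatr_eq0 -lt0n (leq_trans _ L_ge2).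
have Y0 : `|X| `^ mexp q L != 0 by rewrite powR_eq0 normr_eq0 negb_and xk.
rewrite mulNr; field.
by rewrite Y0 L0.
Qed.
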